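(* A series $f=\sum_t\mathsf{G}_t(f)\,t\in G_{\operatorname{NAP}}$ lies in the image of the subgroup $\operatorname{Spec}H_{\operatorname{NAP}}$ (i.e. is of the form $\chi\circ\rho$, viewed through its coordinates $\mathsf{G}_t(f)=\chi(\rho(\mathsf{G}_t))$, for a character $\chi$ of $H_{\operatorname{NAP}}$) if and only if for every rooted tree $t=B(r,t_1,\dots,t_k)$ one has $$\#\operatorname{Aut}(B(r,t_1,\dots,t_k))\,\mathsf{G}_{B(r,t_1,\dots,t_k)}(f)=\prod_{i=1}^k\#\operatorname{Aut}(B(r,t_i))\,\mathsf{G}_{B(r,t_i)}(f).$$
   Context: $\operatorname{NAP}(I)$ is the set of rooted trees on vertex set $I$; composition $t\circ(s_i)_{i\in I}$ is the disjoint union of the $s_i$ plus, for each edge $i$–$i'$ of $t$, an edge between the roots of $s_i$ and $s_{i'}$, with root the root of $s_k$ for $k$ the root of $t$. Coinvariants are unlabeled rooted trees; $\operatorname{Aut}(t)$ is the automorphism group of the rooted tree $t$. $B(r,t_1,\dots,t_k)$ is the tree obtained by adding a new root $r$ joined to the roots of the $t_i$. $G_{\operatorname{NAP}}$ is the group of formal series $f=\sum_t\mathsf{G}_t(f)t$ over unlabeled rooted trees with coefficient $1$ on the one-vertex tree, with product $\alpha\times\beta=\sum_m\sum_{n_1,\dots,n_m}\langle x_m\circ(y_{n_1},\dots,y_{n_m})\rangle$, $x_m,y_n$ being labelled representatives of the degree-$m$ (resp. $n$) parts of $\alpha$, $\beta$, composition extended multilinearly and $\langle\cdot\rangle$ passing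 to unlabeled trees. $\mathbb{Q}[G_{\operatorname{NAP}}]$ is the free commutative Hopf algebra of coordinate functions $\mathsf{G}_t$. $\Pi_{\operatorname{NAP}}(I)$ is the poset of forests on $I$ where $y$ covers $x$ iff $y$ is obtained by joining the root of one component to the root of another; $H_{\operatorname{NAP}}$ is Schmitt's incidence Hopf algebra of the intervals $[\widehat{0},t]$ (basis indexed by isomorphism classes of finite products of such intervals, product from direct product, coproduct $\Delta\mathsf{F}_{[Q]}=\sum_{x\in Q}\mathsf{F}_{[\widehat{0},x]}\otimes\mathsf{F}_{[x,\widehat{1}]}$), $\mathsf{F}_{[t]}$ the element for $[\widehat{0},t]$. $\rho:\mathbb{Q}[G_{\operatorname{NAP}}]\to H_{\operatorname{NAP}}$ is the surjective Hopf algebra morphism with $\rho(\mathsf{G}_t)=\mathsf{F}_{[t]}/\#\operatorname{Aut}(t)$, through which $\operatorname{Spec}H_{\operatorname{NAP}}$ is a subgroup of $G_{\operatorname{NAP}}$. *)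

From HB Require Import structures.
From mathcomp Require Import all_boot all_order all_algebra.
From mathcomp Require Import fingroup perm.
Set Implicit Arguments. Unset Strict Implicit. Unset Printing Implicit Defensive.
Import GRing.Theory.
Local Open Scope ring_scope.

(* ---------- Rooted trees / forests on a finite vertex set I ----------------
   A forest on I is encoded by its parent map p : I -> I: roots are the fixed
   points of p, every other vertex v has the edge v -- p v, and there are no
   cycles other than fixed points (iterating #|I| times lands on a root). *)

Definition is_forest (I : finType) (p : {ffun I -> I}) : bool :=
  [forall x, p (iter #|I| p x) == iter #|I| p x].

Definition is_tree (I : finType) (p : {ffun I -> I}) : bool :=
  is_forest p && (#|[pred x | p x == x]| == 1)%N.

Definition nAut (I : finType) (p : {ffun I -> I}) : nat :=
  #|[set s : {perm I} | [forall x, s (p x) == p (s x)]]|.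

Record ltree := LTree { ltV : finType; ltp : {ffun ltV -> ltV} }.

Definition tree (t : ltree) : bool := is_tree (ltp t).

(* Isomorphism of labelled rooted trees (unlabelled trees = iso classes). *)
Definition tree_iso (t1 t2 : ltree) : Prop :=
  exists (g : ltV t1 -> ltV t2) (h : ltV t2 -> ltV t1),
    [/\ cancel g h, cancel h g & forall x, g (ltp t1 x) = ltp t2 (g x)].

Definition desc (I : finType) (p : {ffun I -> I}) (c x : I) : bool :=
  [exists n : 'I_#|I|.+1, iter n p x == c].

Definition branch_set (I : finType) (p : {ffun I -> I}) (r c : I) : pred I :=
  fun x => (x == r) || desc p c x.

Lemma branch_set_root (I : finType) (p : {ffun I -> I}) (r c : I) :
  branch_set p r c r.
Proof. by rewrite /branch_set eqxx. Qed.

Definition branch_type (I : finType) (p : {ffun I -> I}) (r c : I) : finType :=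
  {x : I | branch_set p r c x}.

Definition branch_root (I : finType) (p : {ffun I -> I}) (r c : I) :
  branch_type p r c := exist _ r (branch_set_root p r c).

(* the rooted tree induced on {r} u (vertices of the subtree rooted at c) *)
Definition branch (t : ltree) (r c : ltV t) : ltree :=
  @LTree (branch_type (ltp t) r c)
    [ffun x : branch_type (ltp t) r c =>
       insubd (branch_root (ltp t) r c) (ltp t (val x))].

Definition nap_cover (I : finType) (x y : {ffun I -> I}) : Prop :=
  is_forest x /\
  exists a b : I, [/\ a != b, x a = a, x b = b &
                      y = [ffun v => if v == a then b else x v]].

Inductive nap_le (I : finType) : {ffun I -> I} -> {ffun I -> I} -> Prop :=
| nap_le_refl x : is_forest x -> nap_le x x
| nap_le_step x y z : nap_cover x y -> nap_le y z -> nap_le x z.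

Definition nap_bot (I : finType) : {ffun I -> I} := [ffun v => v].

Record poset := Poset { pcar : Type; ple : pcar -> pcar -> Prop }.

Definition poset_iso (P Q : poset) : Prop :=
  exists (g : pcar P -> pcar Q) (h : pcar Q -> pcar P),
    [/\ cancel g h, cancel h g & forall a b, ple a b <-> ple (g a) (g b)].

Definition unit_poset : poset := @Poset unit (fun _ _ => True).

Definition prod_poset (P Q : poset) : poset :=
  @Poset (pcar P * pcar Q)%type (fun a b => ple a.1 b.1 /\ ple a.2 b.2).

Definition interval_poset (t : ltree) : poset :=
  @Poset {x : {ffun ltV t -> ltV t} | nap_le (@nap_bot (ltV t)) x /\ nap_le x (ltp t)}
    (fun x y => nap_le (proj1_sig x) (proj1_sig y)).

Definition prod_intervals (L : seq ltree) : poset :=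
  foldr (fun t P => prod_poset (interval_poset t) P) unit_poset L.

Definition tree_list (L : seq ltree) : bool := all tree L.

(* ---------- Characters of H_NAP --------------------------------------------
   As an algebra, H_NAP is the monoid algebra (over Q) of isomorphism classes
   of finite products of intervals [0^, t], with product the direct product
   and unit the one-point poset (empty product).  A character (algebra
   morphism H_NAP -> Q) is therefore exactly a function on finite lists of
   rooted trees (t_1, ..., t_k) (standing for the class of
   [0^,t_1] x ... x [0^,t_k]) which is invariant under poset isomorphism,
   multiplicative w.r.t. concatenation, and sends the empty product to 1.
   chi [:: t] is the value chi(F_[t]). *)
Definition HNAP_character (chi : seq ltree -> rat) : Prop :=
  [/\ chi [::] = 1,
      (forall L1 L2, tree_list L1 -> tree_list L2 ->
         chi (L1 ++ L2) = chi L1 * chi L2) &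
      (forall L1 L2, tree_list L1 -> tree_list L2 ->
         poset_iso (prod_intervals L1) (prod_intervals L2) -> chi L1 = chi L2)].

(* ---------- Elements of G_NAP ---------------------------------------------
   A series f = sum_t G_t(f) t over unlabelled rooted trees is represented by
   its coefficient function G_(.)(f) on labelled rooted trees, required to be
   invariant under isomorphism, with coefficient 1 on the one-vertex tree. *)
Definition in_GNAP (f : ltree -> rat) : Prop :=
  (forall t1 t2, tree t1 -> tree t2 -> tree_iso t1 t2 -> f t1 = f t2) /\
  (forall t, tree t -> #|ltV t| = 1%N -> f t = 1).

(* f lies in the image of Spec H_NAP under rho^*:
   G_t(f) = chi(rho(G_t)) = chi(F_[t]) / #Aut(t) for some character chi. *)
Definition in_image_SpecHNAP (f : ltree -> rat) : Prop :=
  exists chi, HNAP_character chi /\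
    forall t, tree t -> f t = chi [:: t] / (nAut (ltp t))%:R.

Arguments branch : clear implicits.

From HB Require Import structures.
From mathcomp Require Import all_boot all_order all_algebra.
From mathcomp Require Import fingroup perm.
From Stdlib Require Import ProofIrrelevance Setoid.

(* The interval [0^, t] of Pi_NAP is isomorphic to the lattice of downsets of
   the non-roots of t ordered by ancestry (a forest below t is determined by
   the edges of t it keeps), and a product of intervals to the downsets of the
   disjoint union of the trees.  By Birkhoff's theorem an isomorphism of two
   such lattices comes from an ancestry-preserving bijection between
   non-roots; it matches the children of the roots and their branches.
   Hence [0^, B(r, t_1, ..., t_k)] is isomorphic to the product of the
   [0^, B(r, t_i)], so a character of H_NAP satisfies the identity.
   Conversely, under the identity, L |-> prod_(t in L) #Aut(t) G_t(f) equals
   the product of #Aut(b) G_b(f) over the root branches b of the forest of L,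
   which only depends on the isomorphism class of the product of intervals;
   so it is a character chi with chi(F_[t]) = #Aut(t) G_t(f). *)

Set Implicit Arguments. Unset Strict Implicit. Unset Printing Implicit Defensive.
Import GRing.Theory Num.Theory.

(** * Forests as parent maps *)

Section ParentMap.
Variables (T : finType) (p : {ffun T -> T}).

Definition acyclic := forall n x, iter n p x = x -> n = 0 \/ p x = x.

Definition ancestor u x := exists n, iter n p x = u.

Definition root_child x := (p x != x) && (p (p x) == p x).

Lemma root_child_nonroot x : root_child x -> p x != x.
Proof. by case/andP. Qed.

Lemma iter_fixed n y : p y = y -> iter n p y = y.
Proof. by move=> hy; elim: n => //= n ->. Qed.

Lemma forest_iter_ge (F : is_forest p) m x :
  #|T| <= m -> iter m p x = iter #|T| p x.
Proof.
move=> hm; rewrite -(subnK hm) iterD; apply: iter_fixed.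
by move/forallP: F => /(_ x) /eqP.
Qed.

Lemma forest_acyclic : is_forest p -> acyclic.
Proof.
move=> F [|n] x hx; first by left.
right; have hk k : iter (k * n.+1) p x = x.
  by elim: k => // k IH; rewrite mulSn iterD IH hx.
have := hk #|T|; rewrite forest_iter_ge ?leq_pmulr // => <-.
by move/forallP: F => /(_ x) /eqP.
Qed.

(* Pigeonhole: two of the #|T|.+1 first iterates coincide, and acyclicity
   forces the earlier one to be a root. *)
Lemma acyclic_iter_root : acyclic -> forall x, p (iter #|T| p x) = iter #|T| p x.
Proof.
move=> A x.
have : ~~ injectiveb (fun k : 'I_#|T|.+1 => iter k p x).
  by apply/negP => /injectiveP /leq_card; rewrite card_ord ltnn.
case/injectivePn => i [j] nij hij.
wlog lt_ij : i j nij hij / i < j.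
  move=> W; case: (ltngtP i j) => h; first exact: W h.
    by apply: (W j i) => //; rewrite eq_sym.
  by move: nij; rewrite (val_inj h) eqxx.
have hr : p (iter i p x) = iter i p x.
  have := A (j - i) (iter i p x); rewrite -iterD subnK ?(ltnW lt_ij) //.
  by case=> // /eqP; rewrite subn_eq0 leqNgt lt_ij.
have hi : i <= #|T| by rewrite -ltnS.
by rewrite -(subnK hi) iterD iter_fixed.
Qed.

Lemma forestP : is_forest p <-> acyclic.
Proof.
split; first exact: forest_acyclic.
by move=> A; apply/forallP => x; rewrite acyclic_iter_root.
Qed.

Lemma ancestor_refl x : ancestor x x. Proof. by exists 0. Qed.

Lemma ancestor_parent x : ancestor (p x) x. Proof. by exists 1. Qed.

Lemma ancestor_trans u v x : ancestor u v -> ancestor v x -> ancestor u x.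
Proof. by move=> [m hm] [n hn]; exists (m + n); rewrite iterD hn. Qed.

Lemma ancestor_of_parent u x : ancestor u (p x) -> ancestor u x.
Proof. by move/ancestor_trans; apply; apply: ancestor_parent. Qed.

Lemma ancestor_strict u x : ancestor u x -> u != x -> ancestor u (p x).
Proof. by move=> [[|n] hn] hux; [rewrite -hn eqxx in hux | exists n; rewrite -iterSr]. Qed.

Lemma ancestor_root u r : p r = r -> ancestor u r -> u = r.
Proof. by move=> hr [n <-]; rewrite iter_fixed. Qed.

Lemma ancestor_nonroot v x : ancestor v x -> p v != v -> p x != x.
Proof. by move=> h; apply: contraNneq => hx; rewrite (ancestor_root hx h) hx. Qed.

Lemma root_child_ancestors x :
  root_child x <-> p x != x /\ forall u, p u != u -> ancestor u x -> u = x.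
Proof.
rewrite /root_child; split=> [/andP[hx /eqP ht]|[hx H]].
  split=> // u hu [[|n] hn] //; move: hu; rewrite -hn iterSr iter_fixed //.
  by rewrite ht eqxx.
rewrite hx; apply/negPn/negP => hq.
by have := H (p x) hq (ancestor_parent x) => e; rewrite e eqxx in hx.
Qed.

Hypothesis pA : acyclic.

Lemma ancestor_antisym a b : ancestor a b -> ancestor b a -> a = b.
Proof.
move=> [m hm] [n hn].
have : iter (n + m) p b = b by rewrite iterD hm.
case/pA => [/eqP|hb]; last by rewrite -hm iter_fixed.
by rewrite addn_eq0 => /andP[_ /eqP m0]; rewrite -hm m0.
Qed.

Lemma descP c x : reflect (ancestor c x) (desc p c x).
Proof.
have F : is_forest p by apply/forestP.
apply: (iffP existsP) => [[n /eqP hn]|[n hn]]; first by exists n.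
case: (leqP n #|T|) => h; first by exists (Ordinal (h : n < #|T|.+1)); rewrite hn.
by exists ord_max; rewrite /= -(forest_iter_ge F _ (ltnW h)) hn.
Qed.

Definition depth x := ex_minn (ex_intro (fun n => p (iter n p x) == iter n p x)
  #|T| (introT eqP (acyclic_iter_root pA x))).

Lemma depth_parent_lt z : p z != z -> depth (p z) < depth z.
Proof.
move=> hz; rewrite /depth; case: ex_minnP => m _ hm.
case: ex_minnP => [[|k] hk _]; first by rewrite /= (negbTE hz) in hk.
by apply: hm; rewrite -iterSr.
Qed.

End ParentMap.

(** * The interval [0^, p] as a lattice of downsets *)

Section Downsets.
Variables (T : finType) (p : {ffun T -> T}).

(* A forest of the interval
   [0^, p] is determined by the set of edges v -- p v it keeps, and since
   covers only join a root to a root, these sets are closed under children. *)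
Definition downset (S : {set T}) : bool :=
  (S \subset [set v | p v != v]) && [forall z, (p z \in S) ==> (z \in S)].

Definition downset_type := {S : {set T} | downset S}.

Definition downsets : poset := @Poset downset_type (fun A B => val A \subset val B).

Lemma downsetP (S : {set T}) :
  reflect ((forall v, v \in S -> p v != v) /\ (forall z, p z \in S -> z \in S))
          (downset S).
Proof.
apply: (iffP andP) => [[/subsetP h /forallP h2]|[h h2]]; split.
- by move=> v /h; rewrite inE.
- by move=> z; move: (h2 z) => /implyP.
- by apply/subsetP => v /h; rewrite inE.
- by apply/forallP => z; apply/implyP; apply: h2.
Qed.

Lemma downset0 : downset set0.
Proof. by apply/downsetP; split => v; rewrite inE. Qed.

Definition downset0_elt : downset_type := Sub set0 downset0.

End Downsets.

Section NapOrder.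
Variable I : finType.
Implicit Types x y z : {ffun I -> I}.

Lemma nap_le_parent x y : nap_le x y -> forall v, x v != v -> y v = x v.
Proof.
elim=> // {}x {}y z [_ [a [b [_ hxa _ ->]]]] _ IH v hv.
have hva : v != a by apply: contraNneq hv => ->; rewrite hxa.
by rewrite IH ffunE (negbTE hva).
Qed.

Lemma nap_le_nonroot_no_new_child x y v w :
  nap_le x y -> x v != v -> x w = w -> y w != v.
Proof.
move=> hle; elim: hle v w => [{}x _|{}x x' {}y [_ [a [b [hab hxa hxb ex']]]] hle IH] v w hv hw.
  by rewrite hw; apply: contraNneq hv => <-; rewrite hw.
have hva : v != a by apply: contraNneq hv => ->; rewrite hxa.
have [hwa|hwa] := eqVneq w a; last first.
  by apply: IH; rewrite ex' ffunE ?(negbTE hwa) ?(negbTE hva).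
have hx'a : x' a = b by rewrite ex' ffunE eqxx.
rewrite hwa (nap_le_parent hle) hx'a; last by rewrite eq_sym.
by apply: contraNneq hv => <-; rewrite hxb.
Qed.

End NapOrder.

Section Interval.
Variables (I : finType) (p : {ffun I -> I}).
Hypothesis p_forest : is_forest p.

Definition subforest (S : {set I}) : {ffun I -> I} :=
  [ffun v => if v \in S then p v else v].

Definition nonroots (x : {ffun I -> I}) : {set I} := [set v | x v != v].

Lemma subforestE S v : subforest S v = if v \in S then p v else v.
Proof. by rewrite ffunE. Qed.

Lemma subforest_forest S : is_forest (subforest S).
Proof.
apply/forallP => v; apply/eqP.
have follows_p n : subforest S (iter n (subforest S) v) != iter n (subforest S) v ->
    iter n (subforest S) v = iter n p v.
  elim: n => [|n IH] //= h.
  have h' : subforest S (iter n (subforest S) v) != iter n (subforest S) v.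
    by apply: contraNneq h => e; rewrite e e.
  rewrite -(IH h'); move: h'; rewrite subforestE.
  by case: ifP => _; rewrite ?eqxx.
apply/eqP/negPn/negP => hy.
have := hy; rewrite subforestE (follows_p _ hy); case: ifP => _; last by rewrite eqxx.
by move/forallP: p_forest => /(_ v) /eqP ->; rewrite eqxx.
Qed.

Lemma interval_subforest x :
  nap_le x p -> x = subforest (nonroots x) /\ downset p (nonroots x).
Proof.
move=> hx; split.
  apply/ffunP => v; rewrite subforestE inE; case: ifP => h.
    by rewrite (nap_le_parent hx h).
  by move/negbFE/eqP: h.
apply/downsetP; split => [v|z]; first by rewrite inE => h; rewrite (nap_le_parent hx h).
rewrite !inE => h; apply/negP => /eqP hz.
by have := nap_le_nonroot_no_new_child hx h hz; rewrite eqxx.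
Qed.

(* Add the edges of U :\: S one at a time, deepest vertex first, so that each
   step joins two roots. *)
Lemma nap_le_subforest S U : downset p S -> downset p U -> S \subset U ->
  nap_le (subforest S) (subforest U).
Proof.
have A := forest_acyclic p_forest.
move eqk : #|U :\: S| => k; elim: k S eqk => [|k IH] S hk gS gU sSU.
  have -> : S = U.
    by apply/eqP; rewrite eqEsubset sSU /= -setD_eq0 -cards_eq0 hk.
  exact/nap_le_refl/subforest_forest.
have [v0 hv0] : exists v, v \in U :\: S by apply/card_gt0P; rewrite hk.
case: (@arg_maxnP _ v0 (mem (U :\: S)) (depth A) hv0) => v hv vmax.
move: hv; rewrite !inE => /andP[hvS hvU].
case/downsetP: (gS) => gS1 gS2; case/downsetP: (gU) => gU1 gU2.
have hvr : p v != v by apply: gU1.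
have hpv : p v \notin S by apply: contra hvS; apply: gS2.
have gvS : downset p (v |: S).
  apply/downsetP; split => [u|z].
    by rewrite !inE => /orP[/eqP ->|/gS1].
  rewrite !inE => /orP[/eqP hz|/gS2 ->]; last by rewrite orbT.
  have [//|hzv] := eqVneq z v.
  have hzU : z \in U by apply: gU2; rewrite hz.
  have hzr : p z != z by rewrite hz eq_sym.
  have lt := depth_parent_lt A hzr; rewrite hz in lt.
  apply/orP; right; apply/negPn/negP => hzS.
  by have := vmax z; rewrite !inE hzS hzU => /(_ isT) /(leq_trans lt); rewrite ltnn.
apply: (@nap_le_step _ _ (subforest (v |: S))).
  split; first exact: subforest_forest.
  exists v, (p v); split.
  - by rewrite eq_sym.
  - by rewrite subforestE (negbTE hvS).
  - by rewrite subforestE (negbTE hpv).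
  apply/ffunP => w; rewrite ffunE !subforestE !inE.
  by case: (eqVneq w v) => [->|].
apply: IH => //; last first.
  by apply/subsetP => u; rewrite !inE => /orP[/eqP ->//|]; apply/subsetP.
apply/eqP; rewrite -eqSS -hk.
have -> : U :\: S = v |: (U :\: (v |: S)).
  apply/setP => u; rewrite !inE; case: (eqVneq u v) => [->|] //=.
  by rewrite hvS hvU.
by rewrite cardsU1 !inE eqxx.
Qed.

End Interval.

Lemma poset_iso_sym P Q : poset_iso P Q -> poset_iso Q P.
Proof. by move=> [g [h [gK hK H]]]; exists h, g; split => // a b; rewrite H !hK. Qed.

Lemma poset_iso_trans P Q R : poset_iso P Q -> poset_iso Q R -> poset_iso P R.
Proof.
move=> [g [h [gK hK H]]] [g' [h' [gK' hK' H']]].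
exists (g' \o g), (h \o h'); split => [a|a|a b] /=; by rewrite ?gK' ?gK ?hK ?hK' ?H ?H'.
Qed.

Lemma poset_iso_prod P P' Q Q' : poset_iso P P' -> poset_iso Q Q' ->
  poset_iso (prod_poset P Q) (prod_poset P' Q').
Proof.
move=> [g [h [gK hK H]]] [g' [h' [gK' hK' H']]].
exists (fun a => (g a.1, g' a.2)), (fun a => (h a.1, h' a.2)).
by split => [[a b]|[a b]|[a b] [c d]] /=; rewrite ?gK ?gK' ?hK ?hK' ?H ?H'.
Qed.

Lemma proj1_sig_inj (A : Type) (P : A -> Prop) : injective (@proj1_sig A P).
Proof. by move=> [a pa] [b pb] /= e; subst b; rewrite (proof_irrelevance _ pa pb). Qed.

Lemma interval_downsets_iso (t : ltree) : is_forest (ltp t) ->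
  poset_iso (interval_poset t) (downsets (ltp t)).
Proof.
set p := ltp t => F.
have full : downset p [set v | p v != v].
  by apply/downsetP; split => [v|z]; rewrite !inE //; apply: contra => /eqP e; rewrite !e.
have bot_eq : nap_bot (ltV t) = subforest p set0.
  by apply/ffunP => v; rewrite subforestE inE ffunE.
have top_eq : subforest p [set v | p v != v] = p.
  by apply/ffunP => v; rewrite subforestE inE; case: ifP => // /negbFE/eqP.
have mem (S : downset_type p) :
    nap_le (nap_bot (ltV t)) (subforest p (val S)) /\ nap_le (subforest p (val S)) p.
  have sub_full : val S \subset [set v | p v != v].
    by apply/subsetP => v /((downsetP _ _ (valP S)).1 v); rewrite inE.
  split; first by rewrite bot_eq; apply: nap_le_subforest; rewrite ?downset0 ?(valP S) ?sub0set.
  by have := nap_le_subforest F (valP S) full sub_full; rewrite top_eq.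
exists (fun x : pcar (interval_poset t) =>
          insubd (downset0_elt p) (nonroots (proj1_sig x))).
exists (fun S => exist _ (subforest p (val S)) (mem S)).
split.
- move=> [x [hx0 hx]]; apply: proj1_sig_inj => /=.
  by have [ex gx] := interval_subforest hx; rewrite insubdK // -ex.
- move=> S; apply: val_inj => /=; rewrite insubdK; last exact: (interval_subforest (mem S).2).2.
  apply/setP => v; rewrite inE subforestE; case: ifP => [/(downsetP _ _ (valP S)).1 //|_].
  by rewrite eqxx.
move=> [x [hx0 hx]] [y [hy0 hy]] /=.
have [ex gx] := interval_subforest hx; have [ey gy] := interval_subforest hy.
rewrite !insubdK //; split => [hxy|sxy]; last by rewrite ex ey; apply: nap_le_subforest.
by apply/subsetP => v; rewrite !inE => hv; rewrite (nap_le_parent hxy hv).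
Qed.

(** * Disjoint unions of forests *)

Definition forest (t : ltree) : bool := is_forest (ltp t).

Definition forest_sum (t1 t2 : ltree) : ltree :=
  @LTree (ltV t1 + ltV t2)%type
    [ffun x => match x with inl a => inl (ltp t1 a) | inr b => inr (ltp t2 b) end].

Definition empty_forest : ltree := @LTree void [ffun x => x].

Definition forest_of (L : seq ltree) : ltree := foldr forest_sum empty_forest L.

Section ForestSum.
Variables t1 t2 : ltree.
Let t := forest_sum t1 t2.

Lemma sum_parent_inl a : ltp t (inl a) = inl (ltp t1 a). Proof. by rewrite ffunE. Qed.
Lemma sum_parent_inr b : ltp t (inr b) = inr (ltp t2 b). Proof. by rewrite ffunE. Qed.

Lemma iter_sum_inl n a : iter n (ltp t) (inl a) = inl (iter n (ltp t1) a).
Proof. by elim: n => //= n ->; rewrite sum_parent_inl. Qed.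
Lemma iter_sum_inr n b : iter n (ltp t) (inr b) = inr (iter n (ltp t2) b).
Proof. by elim: n => //= n ->; rewrite sum_parent_inr. Qed.

Lemma acyclic_sum : acyclic (ltp t1) -> acyclic (ltp t2) -> acyclic (ltp t).
Proof.
move=> A1 A2 n [a|b].
  by rewrite iter_sum_inl => -[] /A1 [->|e]; [left | right; rewrite sum_parent_inl e].
by rewrite iter_sum_inr => -[] /A2 [->|e]; [left | right; rewrite sum_parent_inr e].
Qed.

Lemma ancestor_sum_inl u a : ancestor (ltp t) (inl u) (inl a) <-> ancestor (ltp t1) u a.
Proof. by split=> -[n hn]; exists n; move: hn; rewrite iter_sum_inl; [case | move=> ->]. Qed.
Lemma ancestor_sum_inr u b : ancestor (ltp t) (inr u) (inr b) <-> ancestor (ltp t2) u b.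
Proof. by split=> -[n hn]; exists n; move: hn; rewrite iter_sum_inr; [case | move=> ->]. Qed.
Lemma ancestor_sum_inl_inr u b : ~ ancestor (ltp t) (inl u) (inr b).
Proof. by move=> [n]; rewrite iter_sum_inr. Qed.
Lemma ancestor_sum_inr_inl u a : ~ ancestor (ltp t) (inr u) (inl a).
Proof. by move=> [n]; rewrite iter_sum_inl. Qed.

Definition sum_set (S1 : {set ltV t1}) (S2 : {set ltV t2}) : {set ltV t} :=
  inl @: S1 :|: inr @: S2.

Lemma sum_set_inl S1 S2 a : (inl a \in sum_set S1 S2) = (a \in S1).
Proof.
rewrite inE (mem_imset _ _ (@inl_inj _ _)).
by case: (a \in S1) => //=; apply/imsetP => [[b _]].
Qed.

Lemma sum_set_inr S1 S2 b : (inr b \in sum_set S1 S2) = (b \in S2).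
Proof.
rewrite inE (mem_imset _ _ (@inr_inj _ _)) orbC.
by case: (b \in S2) => //=; apply/imsetP => [[a _]].
Qed.

Lemma downset_sum_set S1 S2 :
  downset (ltp t1) S1 -> downset (ltp t2) S2 -> downset (ltp t) (sum_set S1 S2).
Proof.
move=> /downsetP [h1 h2] /downsetP [k1 k2]; apply/downsetP.
split=> -[a|b]; rewrite ?sum_parent_inl ?sum_parent_inr ?sum_set_inl ?sum_set_inr.
- by move/h1; apply: contra_neq => -[].
- by move/k1; apply: contra_neq => -[].
- exact: h2.
- exact: k2.
Qed.

Lemma downset_sum_inl S : downset (ltp t) S -> downset (ltp t1) [set a | inl a \in S].
Proof.
move=> /downsetP [h1 h2]; apply/downsetP; split => a; rewrite !inE.
  by move/h1; rewrite sum_parent_inl; apply: contra_neq => ->.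
by rewrite -sum_parent_inl; apply: h2.
Qed.

Lemma downset_sum_inr S : downset (ltp t) S -> downset (ltp t2) [set b | inr b \in S].
Proof.
move=> /downsetP [h1 h2]; apply/downsetP; split => b; rewrite !inE.
  by move/h1; rewrite sum_parent_inr; apply: contra_neq => ->.
by rewrite -sum_parent_inr; apply: h2.
Qed.

Lemma downsets_sum_iso :
  poset_iso (prod_poset (downsets (ltp t1)) (downsets (ltp t2))) (downsets (ltp t)).
Proof.
exists (fun x : downset_type _ * downset_type _ =>
          insubd (downset0_elt (ltp t)) (sum_set (val x.1) (val x.2))).
exists (fun S : downset_type (ltp t) =>
          (insubd (downset0_elt (ltp t1)) [set a | inl a \in val S],
           insubd (downset0_elt (ltp t2)) [set b | inr b \in val S])).
split.
- move=> [[S1 g1] [S2 g2]] /=; rewrite (insubdK _ (downset_sum_set g1 g2)).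
  have -> : [set a | inl a \in sum_set S1 S2] = S1.
    by apply/setP => a; rewrite inE sum_set_inl.
  have -> : [set b | inr b \in sum_set S1 S2] = S2.
    by apply/setP => b; rewrite inE sum_set_inr.
  by congr pair; apply: val_inj; rewrite /= insubdK.
- move=> [S gS]; apply: val_inj => /=.
  rewrite (insubdK _ (downset_sum_inl gS)) (insubdK _ (downset_sum_inr gS)).
  have -> : sum_set [set a | inl a \in S] [set b | inr b \in S] = S.
    by apply/setP => -[a|b]; rewrite ?sum_set_inl ?sum_set_inr inE.
  by rewrite insubdK.
move=> [[S1 g1] [S2 g2]] [[T1 k1] [T2 k2]] /=.
rewrite (insubdK _ (downset_sum_set g1 g2)) (insubdK _ (downset_sum_set k1 k2)); split.
  move=> [/subsetP s1 /subsetP s2]; apply/subsetP => -[a|b];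
    rewrite ?sum_set_inl ?sum_set_inr; [exact: s1 | exact: s2].
move=> /subsetP s; split; apply/subsetP => x hx.
  by have := s (inl x); rewrite !sum_set_inl; apply.
by have := s (inr x); rewrite !sum_set_inr; apply.
Qed.

End ForestSum.

Lemma forest_of_acyclic L : all forest L -> acyclic (ltp (forest_of L)).
Proof.
elim: L => [_ n []|t L IH /andP[Ft FL]] /=.
by apply: acyclic_sum; [exact: forest_acyclic | exact: IH].
Qed.

Lemma tree_list_forest L : tree_list L -> all forest L.
Proof. by apply: sub_all => u /andP[]. Qed.

Lemma intervals_downsets_iso L : all forest L ->
  poset_iso (prod_intervals L) (downsets (ltp (forest_of L))).
Proof.
elim: L => [_|t L IH /andP[Ft FL]] /=.
  exists (fun _ => downset0_elt _), (fun _ => tt); split => [[]|S|a b] //.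
    by apply: val_inj; apply/setP => -[].
  by split => // _; apply/subsetP => -[].
apply: poset_iso_trans (downsets_sum_iso _ _).
by apply: poset_iso_prod; [exact: interval_downsets_iso | exact: IH].
Qed.

(** * Join-irreducible downsets and ancestry *)

Section Birkhoff.
Variables (T : finType) (p : {ffun T -> T}).
Hypothesis pA : acyclic p.

Definition descendants v : {set T} := [set x | desc p v x].

Lemma descendantsP v x : reflect (ancestor p v x) (x \in descendants v).
Proof. by rewrite inE; apply: descP. Qed.

Lemma descendants_refl v : v \in descendants v.
Proof. exact/descendantsP/ancestor_refl. Qed.

Lemma downset_ancestor (S : {set T}) u x :
  downset p S -> ancestor p u x -> u \in S -> x \in S.
Proof.
move=> /downsetP[_ closed] [n]; elim: n x => [|n IH] x /= hx hu; first by rewrite hx.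
by apply: closed; apply: IH => //; rewrite -iterSr.
Qed.

Lemma downset_descendants v : p v != v -> downset p (descendants v).
Proof.
move=> hv; apply/downsetP; split => [x /descendantsP h|z /descendantsP h].
  exact: ancestor_nonroot h hv.
exact/descendantsP/ancestor_of_parent.
Qed.

Definition principal v : downset_type p := insubd (downset0_elt p) (descendants v).

Lemma principalE v : p v != v -> val (principal v) = descendants v.
Proof. by move=> hv; rewrite insubdK //; apply: downset_descendants. Qed.

Lemma descendants_subset u v : descendants u \subset descendants v <-> ancestor p v u.
Proof.
split; first by move/subsetP => /(_ u (descendants_refl u)) /descendantsP.
move=> h; apply/subsetP => x /descendantsP hx; exact/descendantsP/(ancestor_trans h).
Qed.

Lemma descendants_inj : injective descendants.
Proof.
move=> u v e; apply: (ancestor_antisym pA).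
  by apply/(descendants_subset v u); rewrite e.
by apply/(descendants_subset u v); rewrite e.
Qed.

(* a has a unique lower cover *)
Definition join_irreducible (a : downset_type p) : bool :=
  [exists b : downset_type p, (val b \proper val a) &&
     [forall c : downset_type p, (val c \proper val a) ==> (val c \subset val b)]].

Lemma principal_join_irreducible v : p v != v -> join_irreducible (principal v).
Proof.
move=> hv.
have gb : downset p (descendants v :\ v).
  apply/downsetP; split => [x|z]; rewrite !inE.
    by move=> /andP[_ /(descP pA) h]; apply: ancestor_nonroot h hv.
  move=> /andP[hzv /(descP pA) hz]; apply/andP; split; last exact/(descP pA)/ancestor_of_parent.
  apply: contraNneq hzv => e; subst z.
  exact/eqP/(ancestor_antisym pA (ancestor_parent p v) hz).
apply/existsP; exists (insubd (downset0_elt p) (descendants v :\ v)).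
rewrite principalE // insubdK //; apply/andP; split.
  rewrite properE subD1set /=; apply/negP.
  by move=> /subsetP /(_ v (descendants_refl v)); rewrite !inE eqxx.
apply/forallP => c; apply/implyP => hc.
have hvc : v \notin val c.
  apply/negP => hvc; move: hc; rewrite properE => /andP[_]; apply/negP/negPn.
  by apply/subsetP => x /descendantsP hx; apply: downset_ancestor (valP c) hx hvc.
apply/subsetP => x hx; rewrite in_setD1 (subsetP (proper_sub hc) x hx) andbT.
by apply: contraNneq hvc => <-.
Qed.

(* Birkhoff's representation theorem, in the direction needed here. *)
Lemma join_irreducibleP a : join_irreducible a -> exists2 v, p v != v & val a = descendants v.
Proof.
move=> /existsP [b /andP [hba /forallP hb]].
have [/existsP [v /andP [hv /eqP e]]|/existsPn hne] :=
  boolP [exists v in val a, descendants v == val a].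
  by exists v => //; apply: (downsetP _ _ (valP a)).1.
exfalso; move: hba; rewrite properE => /andP[_]; apply/negP/negPn/subsetP => v hv.
have hvr : p v != v by apply: (downsetP _ _ (valP a)).1.
have hDa : descendants v \subset val a.
  by apply/subsetP => x /descendantsP hx; apply: downset_ancestor (valP a) hx hv.
have := hb (principal v); rewrite principalE // properEneq hDa andbT.
have -> : descendants v != val a by have := hne v; rewrite hv.
by move=> /= /subsetP; apply; apply: descendants_refl.
Qed.

End Birkhoff.

Lemma poset_iso_join_irreducible (V W : finType) (pV : {ffun V -> V}) (pW : {ffun W -> W})
    (g : downset_type pV -> downset_type pW) (h : downset_type pW -> downset_type pV) :
  cancel h g ->
  (forall a b : downset_type pV, val a \subset val b <-> val (g a) \subset val (g b)) ->
  forall a, join_irreducible a -> join_irreducible (g a).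
Proof.
move=> hK ord a /existsP [b /andP [hba /forallP hb]].
have proper_g (x y : downset_type pV) : (val x \proper val y) = (val (g x) \proper val (g y)).
  by rewrite !properE; apply/idP/idP => /andP[h1 h2]; apply/andP; split;
    try (by apply/ord); apply: contra h2 => /ord.
apply/existsP; exists (g b); rewrite -proper_g hba /=.
apply/forallP => c; apply/implyP; rewrite -(hK c) -proper_g => hc.
by have := hb (h c); rewrite hc => /ord.
Qed.

(** * Branches at the children of the roots *)

Definition branch_of (t : ltree) (c : ltV t) : ltree := branch t (ltp t c) c.
Arguments branch_of : clear implicits.

Section Branch.
Variable t : ltree.
Hypothesis tA : acyclic (ltp t).
Variable c : ltV t.
Hypothesis c_top : root_child (ltp t) c.

Lemma branchP x :
  reflect (x = ltp t c \/ ancestor (ltp t) c x) (branch_set (ltp t) (ltp t c) c x).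
Proof.
rewrite /branch_set; apply: (iffP orP) => [[/eqP|/(descP tA)]|[->|/(descP tA)]];
  by [left|right|rewrite eqxx|move=> ->; rewrite orbT].
Qed.

Lemma descendant_neq_root y : ancestor (ltp t) c y -> y != ltp t c.
Proof.
case/andP: c_top => hc /eqP hr h; apply/eqP => e; subst y.
by move: hc; rewrite -(ancestor_root hr h) eqxx.
Qed.

Lemma branch_parentE (x : ltV (branch_of t c)) : val (ltp (branch_of t c) x) = ltp t (val x).
Proof.
rewrite /= ffunE insubdK //; apply/branchP.
case/branchP: (valP x) => [->|h]; first by left; case/andP: c_top => _ /eqP.
have [->|hxc] := eqVneq (val x) c; first by left.
by right; apply: ancestor_strict h _; rewrite eq_sym.
Qed.

Lemma iter_branch_parentE n (x : ltV (branch_of t c)) :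
  val (iter n (ltp (branch_of t c)) x) = iter n (ltp t) (val x).
Proof. by elim: n => // n IH; rewrite !iterS branch_parentE IH. Qed.

Lemma branch_of_tree : tree (branch_of t c).
Proof.
apply/andP; split.
  apply/forestP => n x hx.
  have := congr1 val hx; rewrite iter_branch_parentE => /tA [->|e]; first by left.
  by right; apply: val_inj; rewrite branch_parentE.
apply/eqP/(eq_card1 (x := branch_root (ltp t) (ltp t c) c)) => x; rewrite !inE.
apply/eqP/eqP => [|->]; last first.
  by apply: val_inj; rewrite branch_parentE; case/andP: c_top => _ /eqP.
move/(congr1 val); rewrite branch_parentE => hx; apply: val_inj => /=.
case/branchP: (valP x) => // h.
by case/andP: c_top => /negP[]; rewrite (ancestor_root hx h) hx.
Qed.

End Branch.

Section BranchTransport.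
Variables t1 t2 : ltree.
Hypotheses (A1 : acyclic (ltp t1)) (A2 : acyclic (ltp t2)).
Variables (c : ltV t1) (phi : ltV t1 -> ltV t2) (psi : ltV t2 -> ltV t1).
Hypotheses (c1 : root_child (ltp t1) c) (c2 : root_child (ltp t2) (phi c)).
Hypothesis phiK : forall x, ancestor (ltp t1) c x ->
  ancestor (ltp t2) (phi c) (phi x) /\ psi (phi x) = x.
Hypothesis psiK : forall y, ancestor (ltp t2) (phi c) y ->
  ancestor (ltp t1) c (psi y) /\ phi (psi y) = y.
Hypothesis phi_parent : forall x, ancestor (ltp t1) c x -> x != c ->
  ltp t2 (phi x) = phi (ltp t1 x).

Let r1 := ltp t1 c.
Let r2 := ltp t2 (phi c).
Let root1 : ltV (branch_of t1 c) := branch_root (ltp t1) r1 c.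
Let root2 : ltV (branch_of t2 (phi c)) := branch_root (ltp t2) r2 (phi c).

Let bg (x : ltV (branch_of t1 c)) :=
  if val x == r1 then root2 else insubd root2 (phi (val x)).
Let bh (y : ltV (branch_of t2 (phi c))) :=
  if val y == r2 then root1 else insubd root1 (psi (val y)).

Let bg_root x : val x = r1 -> bg x = root2.
Proof. by rewrite /bg => ->; rewrite eqxx. Qed.
Let bh_root y : val y = r2 -> bh y = root1.
Proof. by rewrite /bh => ->; rewrite eqxx. Qed.

Let bgE x : ancestor (ltp t1) c (val x) -> val (bg x) = phi (val x).
Proof.
move=> h; rewrite /bg (negbTE (descendant_neq_root c1 h)) insubdK //.
by apply/(branchP A2); right; apply: (phiK h).1.
Qed.

Let bhE y : ancestor (ltp t2) (phi c) (val y) -> val (bh y) = psi (val y).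
Proof.
move=> h; rewrite /bh (negbTE (descendant_neq_root c2 h)) insubdK //.
by apply/(branchP A1); right; apply: (psiK h).1.
Qed.

Lemma branch_of_transport : tree_iso (branch_of t1 c) (branch_of t2 (phi c)).
Proof.
exists bg, bh; split.
- move=> x; case/(branchP A1): (valP x) => [e|h].
    by rewrite bg_root // bh_root //; apply: val_inj.
  have a2 : ancestor (ltp t2) (phi c) (val (bg x)) by rewrite bgE //; exact: (phiK h).1.
  by apply: val_inj; rewrite bhE // bgE // (phiK h).2.
- move=> y; case/(branchP A2): (valP y) => [e|h].
    by rewrite bh_root // bg_root //; apply: val_inj.
  have a1 : ancestor (ltp t1) c (val (bh y)) by rewrite bhE //; exact: (psiK h).1.
  by apply: val_inj; rewrite bgE // bhE // (psiK h).2.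
move=> x; apply: val_inj; rewrite (branch_parentE A2 c2).
have r2_root : ltp t2 r2 = r2 by case/andP: c2 => _ /eqP.
case/(branchP A1): (valP x) => [e|h].
  by rewrite !bg_root ?(branch_parentE A1 c1) ?e //; case/andP: c1 => _ /eqP.
have [e|hxc] := eqVneq (val x) c.
  by rewrite bg_root ?(branch_parentE A1 c1) ?e // bgE // e.
have h' : ancestor (ltp t1) c (ltp t1 (val x)) by apply: ancestor_strict; rewrite // eq_sym.
by rewrite !bgE ?(branch_parentE A1 c1) ?phi_parent.
Qed.

End BranchTransport.

Definition ancestry_iso (V W : finType) (pV : {ffun V -> V}) (pW : {ffun W -> W})
    (phi : V -> W) : Prop :=
  [/\ forall v, pV v != v -> pW (phi v) != phi v,
      forall u v, pV u != u -> pV v != v ->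
        ancestor pV u v <-> ancestor pW (phi u) (phi v) &
      forall w, pW w != w -> exists2 v, pV v != v & phi v = w].

(* Non-root vertices correspond to the join-irreducible downsets. *)
Lemma downsets_iso_ancestry_iso (V W : finType) (pV : {ffun V -> V}) (pW : {ffun W -> W})
    (w0 : W) :
  acyclic pV -> acyclic pW -> poset_iso (downsets pV) (downsets pW) ->
  exists phi, ancestry_iso pV pW phi.
Proof.
move=> AV AW [g [h [gK hK ord]]].
have ordh (a b : downset_type pW) :
  val a \subset val b <-> val (h a) \subset val (h b).
  by move: (ord (h a) (h b)); rewrite /= !hK; apply: iff_sym.
pose phi v := odflt w0
  [pick u | (pW u != u) && (descendants pW u == val (g (principal pV v)))].
have phiP v : pV v != v ->
    pW (phi v) != phi v /\ descendants pW (phi v) = val (g (principal pV v)).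
  move=> hv; have [u hu e] := join_irreducibleP AW
    (poset_iso_join_irreducible hK ord (principal_join_irreducible AV hv)).
  rewrite /phi; case: pickP => [u' /andP [hu' /eqP e'] //|/(_ u)].
  by rewrite hu e eqxx.
exists phi; split => [v /phiP[] //|u v hu hv|w hw].
  rewrite -(descendants_subset AV) -(descendants_subset AW) (phiP u hu).2 (phiP v hv).2.
  by rewrite -(principalE AV hu) -(principalE AV hv); apply: ord.
have [v hv e] := join_irreducibleP AV
  (poset_iso_join_irreducible gK ordh (principal_join_irreducible AW hw)).
exists v => //; apply: (descendants_inj AW); rewrite (phiP v hv).2.
have -> : principal pV v = h (principal pW w) by apply: val_inj; rewrite e (principalE AV hv).
by rewrite hK (principalE AW hw).
Qed.

Section AncestryIso.
Variables tV tW : ltree.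
Hypotheses (AV : acyclic (ltp tV)) (AW : acyclic (ltp tW)).
Variable phi : ltV tV -> ltV tW.
Hypothesis phiA : ancestry_iso (ltp tV) (ltp tW) phi.

Let pV := ltp tV.
Let pW := ltp tW.

Lemma ancestry_iso_nonroot v : pV v != v -> pW (phi v) != phi v.
Proof. by case: phiA => H1 _ _; apply: H1. Qed.

Lemma ancestry_isoP u v : pV u != u -> pV v != v ->
  ancestor pV u v <-> ancestor pW (phi u) (phi v).
Proof. by case: phiA => _ H2 _; apply: H2. Qed.

Lemma ancestry_iso_onto w : pW w != w -> exists2 v, pV v != v & phi v = w.
Proof. by case: phiA => _ _ H3; apply: H3. Qed.

Lemma ancestry_iso_inj u v : pV u != u -> pV v != v -> phi u = phi v -> u = v.
Proof.
move=> hu hv e; apply: (ancestor_antisym AV).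
  by apply/(ancestry_isoP hu hv); rewrite e; apply: ancestor_refl.
by apply/(ancestry_isoP hv hu); rewrite e; apply: ancestor_refl.
Qed.

Lemma ancestry_iso_root_child x : pV x != x -> root_child pW (phi x) = root_child pV x.
Proof.
move=> hx; apply/idP/idP => /root_child_ancestors[_ H]; apply/root_child_ancestors.
  split=> // u hu hux; apply: (ancestry_iso_inj hu hx); apply: H.
    exact: ancestry_iso_nonroot.
  by apply/ancestry_isoP.
split=> [|w hw hwx]; first exact: ancestry_iso_nonroot.
have [u hu eu] := ancestry_iso_onto hw; rewrite -eu; congr phi.
by apply: H => //; apply/(ancestry_isoP hu hx); rewrite eu.
Qed.

Lemma ancestry_iso_parent x : pV x != x -> ~~ root_child pV x -> pW (phi x) = phi (pV x).
Proof.
move=> hx ht.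
have hpx : pV (pV x) != pV x by move: ht; rewrite /root_child hx.
have hphx := ancestry_iso_nonroot hx.
have hpW : pW (pW (phi x)) != pW (phi x).
  by move: ht; rewrite -(ancestry_iso_root_child hx) /root_child hphx.
have a1 : ancestor pW (phi (pV x)) (pW (phi x)).
  apply: ancestor_strict; first by apply/(ancestry_isoP hpx hx)/ancestor_parent.
  by apply/eqP => /(ancestry_iso_inj hpx hx) e; rewrite e eqxx in hx.
have [u hu eu] := ancestry_iso_onto hpW.
have aux : ancestor pV u x by apply/(ancestry_isoP hu hx); rewrite eu; apply: ancestor_parent.
have aup : ancestor pV u (pV x).
  by apply: ancestor_strict aux _; apply: contra_neq hphx => e; rewrite -eu e.
by apply: (ancestor_antisym AW) _ a1; rewrite -eu; apply/(ancestry_isoP hu hpx).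
Qed.

Lemma branch_of_ancestry_iso c :
  root_child pV c -> tree_iso (branch_of tV c) (branch_of tW (phi c)).
Proof.
move=> hc; have hcr : pV c != c by case/andP: hc.
pose psi w := odflt c [pick v | (pV v != v) && (phi v == w)].
have psiK v : pV v != v -> psi (phi v) = v.
  move=> hv; rewrite /psi; case: pickP => [v' /andP [hv' /eqP e]|/(_ v)] /=.
    exact: ancestry_iso_inj e.
  by rewrite hv eqxx.
apply: (branch_of_transport AV AW (psi := psi)) => //.
- by rewrite ancestry_iso_root_child.
- move=> x hx; have hxr := ancestor_nonroot hx hcr.
  by split; [apply/(ancestry_isoP hcr hxr) | apply: psiK].
- move=> y hy; have [v hv e] := ancestry_iso_onto (ancestor_nonroot hy (ancestry_iso_nonroot hcr)).
  by subst y; rewrite psiK //; split => //; apply/(ancestry_isoP hcr hv).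
move=> x hx hxc; have hxr := ancestor_nonroot hx hcr.
apply: ancestry_iso_parent => //; apply/negP => /root_child_ancestors[_ H].
by move: hxc; rewrite (H c hcr hx) eqxx.
Qed.

End AncestryIso.

Lemma tree_iso_sym t1 t2 : tree_iso t1 t2 -> tree_iso t2 t1.
Proof.
move=> [g [h [gK hK H]]]; exists h, g; split => // y.
by rewrite -{1}(hK y) -H gK.
Qed.

(* Conjugating by the isomorphism maps automorphisms injectively. *)
Lemma nAut_iso_le t1 t2 : tree_iso t1 t2 -> nAut (ltp t1) <= nAut (ltp t2).
Proof.
move=> [g [h [gK hK H]]].
have conj_inj (s : {perm ltV t1}) : injective (g \o (s \o h)).
  by apply: inj_comp (can_inj gK) _; apply: inj_comp (perm_inj (s := s)) (can_inj hK).
have cinj : injective (fun s => perm (conj_inj s)).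
  move=> s1 s2 e; apply/permP => x.
  have := congr1 (fun s : {perm _} => s (g x)) e; rewrite !permE /= gK.
  exact: (can_inj gK).
rewrite /nAut -(card_imset _ cinj); apply: subset_leq_card.
apply/subsetP => _ /imsetP [s hs ->]; move: hs; rewrite !inE => /forallP hs.
apply/forallP => y; rewrite !permE /=.
have e : h (ltp t2 y) = ltp t1 (h y) by rewrite -{1}(hK y) -H gK.
by rewrite e (eqP (hs _)) H.
Qed.

Lemma nAut_iso t1 t2 : tree_iso t1 t2 -> nAut (ltp t1) = nAut (ltp t2).
Proof.
by move=> I; apply/eqP; rewrite eqn_leq !nAut_iso_le //; apply: tree_iso_sym.
Qed.

Section SumBranches.
Variables t1 t2 : ltree.
Hypotheses (A1 : acyclic (ltp t1)) (A2 : acyclic (ltp t2)).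
Let t := forest_sum t1 t2.

Lemma root_child_sum_inl a : root_child (ltp t) (inl a) = root_child (ltp t1) a.
Proof. by rewrite /root_child !sum_parent_inl !(inj_eq inl_inj). Qed.

Lemma root_child_sum_inr b : root_child (ltp t) (inr b) = root_child (ltp t2) b.
Proof. by rewrite /root_child !sum_parent_inr !(inj_eq inr_inj). Qed.

Lemma branch_of_sum_inl c : root_child (ltp t1) c ->
  tree_iso (branch_of t1 c) (branch_of t (inl c)).
Proof.
move=> hc; pose psi (y : ltV t) := if y is inl a then a else c.
apply: (branch_of_transport A1 (acyclic_sum A1 A2) (phi := inl) (psi := psi)) => //.
- by rewrite root_child_sum_inl.
- by move=> x hx; split => //; apply/ancestor_sum_inl.
- by move=> [a|b] /= h; [split => //; apply/(ancestor_sum_inl t2) | case: (ancestor_sum_inl_inr h)].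
by move=> x _ _; rewrite sum_parent_inl.
Qed.

Lemma branch_of_sum_inr c : root_child (ltp t2) c ->
  tree_iso (branch_of t2 c) (branch_of t (inr c)).
Proof.
move=> hc; pose psi (y : ltV t) := if y is inr b then b else c.
apply: (branch_of_transport A2 (acyclic_sum A1 A2) (phi := inr) (psi := psi)) => //.
- by rewrite root_child_sum_inr.
- by move=> x hx; split => //; apply/ancestor_sum_inr.
- by move=> [a|b] /= h; [case: (ancestor_sum_inr_inl h) | split => //; apply/(ancestor_sum_inr t1)].
by move=> x _ _; rewrite sum_parent_inr.
Qed.

End SumBranches.

Section RootChildren.
Variables (T : finType) (p : {ffun T -> T}).
Hypothesis pA : acyclic p.

Lemma root_child_ancestor_uniq c1 c2 v : root_child p c1 -> root_child p c2 ->
  ancestor p c1 v -> ancestor p c2 v -> c1 = c2.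
Proof.
move=> h1 h2 [m hm] [n hn].
wlog le_mn : c1 c2 m n h1 h2 hm hn / m <= n.
  move=> W; case: (leqP m n) => h; first exact: W h.
  by apply/esym; apply: (W c2 c1 n m) => //; apply: ltnW.
case/andP: h1 => _ /eqP r1; case/andP: h2 => /negP h2 _.
move: hn; rewrite -(subnK le_mn) iterD hm; case: (n - m) => [//|k].
by rewrite iterSr iter_fixed // => e; case: h2; rewrite -e r1.
Qed.

Lemma root_child_ancestor v : p v != v -> exists2 c, root_child p c & ancestor p c v.
Proof.
have [n] := ubnP (depth pA v); elim: n v => // n IH v /ltnSE hd hv.
have [hpv|hpv] := boolP (p (p v) == p v).
  by exists v; [apply/andP | apply: ancestor_refl].
have [c hc hcv] := IH (p v) (leq_trans (depth_parent_lt pA hv) hd) hpv.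
by exists c => //; apply: ancestor_of_parent.
Qed.

End RootChildren.

Section ForestMorphism.
Variables (V W : finType) (pV : {ffun V -> V}) (pW : {ffun W -> W}) (beta : W -> V).
Hypothesis beta_parent : forall w, beta (pW w) = pV (beta w).
Hypothesis beta_nonroot : forall w, (pV (beta w) != beta w) = (pW w != w).
Hypothesis beta_inj : {in [pred w | pW w != w] &, injective beta}.
Hypothesis beta_onto : forall v, pV v != v -> exists2 w, pW w != w & beta w = v.

Definition nonroot_preimset (S : {set V}) : {set W} := [set w | (pW w != w) && (beta w \in S)].

Lemma downset_imset S : downset pW S -> downset pV (beta @: S).
Proof.
move=> /downsetP [g1 g2]; apply/downsetP; split.
  by move=> _ /imsetP [w hw ->]; rewrite beta_nonroot g1.
move=> z /imsetP [w hw e].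
have [ez|hz] := eqVneq (pV z) z; first by rewrite -ez e; apply: imset_f.
have [w' hw' ez] := beta_onto hz; subst z.
have hpw' : pW (pW w') != pW w' by rewrite -beta_nonroot beta_parent e beta_nonroot g1.
by apply: imset_f; apply: g2; rewrite (beta_inj hpw' (g1 _ hw)) // beta_parent.
Qed.

Lemma downset_preimset S : downset pV S -> downset pW (nonroot_preimset S).
Proof.
move=> /downsetP [g1 g2]; apply/downsetP; split => [w|z]; rewrite !inE; first by case/andP.
move=> /andP [hpz hb]; have [ez|hz] := eqVneq (pW z) z; first by move: hpz; rewrite !ez eqxx.
by apply: g2; rewrite -beta_parent.
Qed.

Lemma downsets_iso_of_morphism : poset_iso (downsets pW) (downsets pV).
Proof.
exists (fun S : downset_type pW => insubd (downset0_elt pV) (beta @: val S)).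
exists (fun S : downset_type pV => insubd (downset0_elt pW) (nonroot_preimset (val S))).
split.
- move=> S; apply: val_inj => /=; have gS := downset_imset (valP S).
  rewrite (insubdK _ gS) (insubdK _ (downset_preimset gS)).
  apply/setP => w; rewrite !inE; apply/andP/idP => [[hw /imsetP [w' hw' e]]|hw].
    by rewrite (beta_inj hw ((downsetP _ _ (valP S)).1 _ hw') e).
  by split; [exact: (downsetP _ _ (valP S)).1 | apply: imset_f].
- move=> S; apply: val_inj => /=; have gS := downset_preimset (valP S).
  rewrite (insubdK _ gS) (insubdK _ (downset_imset gS)).
  apply/setP => v; apply/imsetP/idP => [[w]|hv]; first by rewrite inE => /andP[_ h] ->.
  have [w hw e] := beta_onto ((downsetP _ _ (valP S)).1 _ hv).
  by exists w => //; rewrite inE hw e hv.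
move=> S S' /=.
rewrite (insubdK _ (downset_imset (valP S))) (insubdK _ (downset_imset (valP S'))).
split => [|/subsetP h]; first exact: imsetS.
apply/subsetP => w hw.
have hw' : w \in [pred w | pW w != w] by apply: (downsetP _ _ (valP S)).1.
have /imsetP [w' hw'' e] := h _ (imset_f beta hw).
by rewrite (beta_inj hw' _ e) // inE; apply: (downsetP _ _ (valP S')).1.
Qed.

End ForestMorphism.

Section RootBranches.
Variable t : ltree.
Hypothesis tA : acyclic (ltp t).

Definition root_branches (s : seq (ltV t)) : seq ltree := [seq branch_of t c | c <- s].

(* Each vertex of a branch is sent to the vertex of t it comes from. *)
Fixpoint branch_val (s : seq (ltV t)) : ltV (forest_of (root_branches s)) -> ltV t :=
  match s return ltV (forest_of (root_branches s)) -> ltV t with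
  | [::] => fun v => match v with end
  | c :: s' => fun v => match v with inl x => val x | inr y => @branch_val s' y end
  end.

Implicit Types s : seq (ltV t).

Lemma branch_val_parent s (y : ltV (forest_of (root_branches s))) :
  all (root_child (ltp t)) s ->
  branch_val (ltp (forest_of (root_branches s)) y) = ltp t (branch_val y).
Proof.
elim: s y => [|c s IH] // [x|y] /andP[hc hs].
  by rewrite sum_parent_inl /= (branch_parentE tA hc).
by rewrite sum_parent_inr /= IH.
Qed.

Lemma branch_val_nonroot s (y : ltV (forest_of (root_branches s))) :
  all (root_child (ltp t)) s ->
  (ltp t (branch_val y) != branch_val y) = (ltp (forest_of (root_branches s)) y != y).
Proof.
elim: s y => [|c s IH] // [x|y] /andP[hc hs].
  by rewrite sum_parent_inl (inj_eq inl_inj) -(inj_eq val_inj) (branch_parentE tA hc).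
by rewrite sum_parent_inr (inj_eq inr_inj) IH.
Qed.

Lemma branch_val_ancestor s (y : ltV (forest_of (root_branches s))) :
  all (root_child (ltp t)) s -> ltp (forest_of (root_branches s)) y != y ->
  exists2 c, c \in s & ancestor (ltp t) c (branch_val y).
Proof.
elim: s y => [|c s IH] // [x|y] /andP[hc hs] hy.
  exists c; first by rewrite inE eqxx.
  case/(branchP tA): (valP x) => // e.
  move: hy; rewrite sum_parent_inl (inj_eq inl_inj) -(inj_eq val_inj).
  by rewrite (branch_parentE tA hc) e; case/andP: hc => _ ->.
move: hy; rewrite sum_parent_inr (inj_eq inr_inj) => /(IH _ hs) [c' h1 h2].
by exists c' => //; rewrite inE h1 orbT.
Qed.

Lemma branch_val_onto s c v : c \in s -> ancestor (ltp t) c v ->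
  exists y : ltV (forest_of (root_branches s)), branch_val y = v.
Proof.
elim: s => [|c' s IH] //; rewrite inE => /orP[/eqP ->|hin] ha.
  have hv : branch_set (ltp t) (ltp t c') c' v by apply/(branchP tA); right.
  by exists (inl (Sub v hv)).
by have [y <-] := IH hin ha; exists (inr y).
Qed.

Lemma branch_val_inj s : all (root_child (ltp t)) s -> uniq s ->
  {in [pred y | ltp (forest_of (root_branches s)) y != y] &, injective (@branch_val s)}.
Proof.
elim: s => [|c s IH] // /andP[hc hs] /andP[hcs us].
have disjoint (x : ltV (branch_of t c)) (y : ltV (forest_of (root_branches s))) :
    ltp _ y != y -> ancestor (ltp t) c (val x) -> val x <> branch_val y.
  move=> hy hx e; have [c' hc' ha'] := branch_val_ancestor hs hy.
  have hc'' : root_child (ltp t) c' by apply: (allP hs).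
  have cc : c = c' by rewrite -e in ha'; exact: root_child_ancestor_uniq hc hc'' hx ha'.
  by move: hcs; rewrite cc hc'.
have anc_x (x : ltV (branch_of t c)) :
    ltp (forest_of (root_branches (c :: s))) (inl x) != inl x -> ancestor (ltp t) c (val x).
  rewrite sum_parent_inl (inj_eq inl_inj) -(inj_eq val_inj) (branch_parentE tA hc).
  by case/(branchP tA): (valP x) => // ->; case/andP: hc => _ ->.
move=> [x1|y1] [x2|y2]; rewrite !inE => h1 h2 /= e.
- by congr inl; apply: val_inj.
- case: (disjoint x1 y2 _ (anc_x _ h1) e) => //.
  by move: h2; rewrite sum_parent_inr (inj_eq inr_inj).
- case: (disjoint x2 y1 _ (anc_x _ h2) (esym e)) => //.
  by move: h1; rewrite sum_parent_inr (inj_eq inr_inj).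
congr inr; apply: IH => //.
  by move: h1; rewrite inE sum_parent_inr (inj_eq inr_inj).
by move: h2; rewrite inE sum_parent_inr (inj_eq inr_inj).
Qed.

End RootBranches.

Arguments root_branches : clear implicits.

Lemma root_branches_interval_iso t : acyclic (ltp t) ->
  poset_iso (prod_intervals [:: t])
            (prod_intervals (root_branches t (enum (root_child (ltp t))))).
Proof.
move=> tA; set s := enum _.
have s_top : all (root_child (ltp t)) s by apply/allP => c; rewrite mem_enum.
have forests : all forest (root_branches t s).
  by rewrite all_map; apply/allP => c /(allP s_top) hc; case/andP: (branch_of_tree tA hc).
apply: poset_iso_trans (intervals_downsets_iso _) _; first by rewrite /= andbT; apply/forestP.
apply: poset_iso_trans (poset_iso_sym (intervals_downsets_iso forests)).
apply: poset_iso_sym.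
apply: (@downsets_iso_of_morphism _ _ _ _ (fun y => inl (branch_val y))).
- by move=> y; rewrite sum_parent_inl (branch_val_parent tA y s_top).
- by move=> y; rewrite sum_parent_inl (inj_eq inl_inj) (branch_val_nonroot tA y s_top).
- by move=> y1 y2 h1 h2 [e]; apply: (branch_val_inj tA s_top (enum_uniq _)).
move=> [a|[]]; rewrite sum_parent_inl (inj_eq inl_inj) => ha.
have [c hc hca] := root_child_ancestor tA ha.
have hcs : c \in s by rewrite mem_enum.
have [y hy] := branch_val_onto tA hcs hca.
by exists y; [rewrite -(branch_val_nonroot tA y s_top) hy | rewrite hy].
Qed.

(** * Characters of H_NAP *)

Local Open Scope ring_scope.

Lemma tree_root t : tree t -> exists r, ltp t r = r.
Proof.
case/andP=> _ /card1P [r hr]; exists r; apply/eqP.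
by move: (hr r); rewrite !inE eqxx => ->.
Qed.

Lemma tree_root_uniq t r x : tree t -> ltp t r = r -> ltp t x = x -> x = r.
Proof.
case/andP=> _ /card1P [r0 h] hr hx.
by move: (h r) (h x); rewrite !inE hr hx !eqxx => /esym/eqP -> /esym/eqP ->.
Qed.

Lemma nAut_neq0 (I : finType) (p : {ffun I -> I}) : (nAut p)%:R != 0 :> rat.
Proof.
rewrite pnatr_eq0 -lt0n; apply/card_gt0P; exists 1%g.
by rewrite inE; apply/forallP => x; rewrite !perm1.
Qed.

Section Weights.
Variable f : ltree -> rat.

Definition aut_weight (t : ltree) : rat := (nAut (ltp t))%:R * f t.

Definition root_children_weight (t : ltree) : rat :=
  \prod_(c : ltV t | root_child (ltp t) c) aut_weight (branch_of t c).

Lemma root_children_weightE t r : tree t -> ltp t r = r ->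
  \prod_(c : ltV t | (c != r) && (ltp t c == r)) aut_weight (branch t r c) =
  root_children_weight t.
Proof.
move=> Tt hr; apply: eq_big => [c|c /andP[_ /eqP <-] //].
rewrite /root_child; apply/andP/andP => [[hcr /eqP hpc]|[hc /eqP hpc]].
  by rewrite hpc hr eqxx eq_sym.
rewrite -(tree_root_uniq Tt hr hpc) eq_sym; split => //.
Qed.

Lemma HNAP_character_prod chi L : HNAP_character chi -> tree_list L ->
  chi L = \prod_(t <- L) chi [:: t].
Proof.
case=> c0 cmul _; elim: L => [|t L IH] /=; first by rewrite big_nil.
by move=> /andP[Tt TL]; rewrite big_cons -IH // -cmul //= Tt.
Qed.

Lemma image_root_children_weight : in_image_SpecHNAP f ->
  forall t, tree t -> aut_weight t = root_children_weight t.
Proof.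
move=> [chi [chiH hchi]] t Tt.
have weightE u : tree u -> aut_weight u = chi [:: u].
  by move=> Tu; rewrite /aut_weight hchi // mulrC divfK ?nAut_neq0.
have tA : acyclic (ltp t) by apply/forestP; case/andP: Tt.
have Tb : tree_list (root_branches t (enum (root_child (ltp t)))).
  by rewrite /tree_list all_map; apply/allP => c; rewrite mem_enum => /(branch_of_tree tA).
rewrite weightE // /root_children_weight.
rewrite (eq_bigr (fun c => chi [:: branch_of t c])) => [|c hc]; last first.
  exact/weightE/branch_of_tree.
rewrite -(big_enum _ _ (root_child (ltp t))) /=.
rewrite -(big_map (branch_of t) xpredT (fun u => chi [:: u])).
rewrite -HNAP_character_prod //.
case: chiH => _ _ ciso; apply: ciso => //; first by rewrite /tree_list /= Tt.
exact: root_branches_interval_iso.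
Qed.

Hypothesis f_GNAP : in_GNAP f.

Lemma aut_weight_iso t1 t2 : tree t1 -> tree t2 -> tree_iso t1 t2 ->
  aut_weight t1 = aut_weight t2.
Proof. by move=> T1 T2 I; rewrite /aut_weight (nAut_iso I) (f_GNAP.1 _ _ T1 T2 I). Qed.

Lemma root_children_weight_iso tV tW : acyclic (ltp tV) -> acyclic (ltp tW) ->
  poset_iso (downsets (ltp tV)) (downsets (ltp tW)) ->
  root_children_weight tV = root_children_weight tW.
Proof.
move=> AV AW iso; rewrite /root_children_weight.
(* A vertex w0 of tW is needed to build the vertex bijection; if there is
   none, tV has no non-root either, as it would give a join-irreducible. *)
have [w0 _|W0] := pickP (@predT (ltV tW)); last first.
  rewrite [RHS]big_pred0 => [|w]; last by have := W0 w.
  apply: big_pred0 => c; apply/negP => /andP[hc _].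
  case: iso => g [h [_ hK ord]]; have [w _ _] := join_irreducibleP AW
    (poset_iso_join_irreducible hK ord (principal_join_irreducible AV hc)).
  by have := W0 w.
have [phi phiA] := downsets_iso_ancestry_iso w0 AV AW iso.
rewrite [RHS](eq_bigl (mem (phi @: [set c | root_child (ltp tV) c]))) => [|d]; last first.
  apply/idP/imsetP => [hd|[c hc ->]].
    have [c hc ed] := ancestry_iso_onto phiA (root_child_nonroot hd); subst d.
    by exists c; rewrite // inE -(ancestry_iso_root_child AV phiA hc).
  move: hc; rewrite inE => hc.
  by rewrite (ancestry_iso_root_child AV phiA (root_child_nonroot hc)).
rewrite big_imset /=; last first.
  move=> c1 c2; rewrite !inE => /root_child_nonroot h1 /root_child_nonroot h2.
  exact (ancestry_iso_inj AV phiA h1 h2).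
rewrite big_set; apply: eq_bigr => c hc.
have hc' : root_child (ltp tW) (phi c).
  by rewrite (ancestry_iso_root_child AV phiA (root_child_nonroot hc)).
apply: (aut_weight_iso (branch_of_tree AV hc) (branch_of_tree AW hc')).
exact (branch_of_ancestry_iso AV AW phiA hc).
Qed.

Section Converse.
Hypothesis weight_branches : forall t, tree t -> aut_weight t = root_children_weight t.

Lemma prod_aut_weight_forest_of L : tree_list L ->
  \prod_(t <- L) aut_weight t = root_children_weight (forest_of L).
Proof.
elim: L => [|t L IH]; first by rewrite big_nil /root_children_weight big_pred0 // => -[].
move=> /andP[Tt TL].
have tA : acyclic (ltp t) by apply/forestP; case/andP: Tt.
have LA := forest_of_acyclic (tree_list_forest TL).
have sA := acyclic_sum tA LA.
rewrite big_cons IH // weight_branches // /root_children_weight big_sumType.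
congr (_ * _); apply: eq_big => c.
- by rewrite (root_child_sum_inl (forest_of L)).
- move=> hc; have hc' := hc; rewrite -(root_child_sum_inl (forest_of L)) in hc'.
  exact (aut_weight_iso (branch_of_tree tA hc) (branch_of_tree sA hc')
           (branch_of_sum_inl tA LA hc)).
- by rewrite (root_child_sum_inr t).
move=> hc; have hc' := hc; rewrite -(root_child_sum_inr t) in hc'.
exact (aut_weight_iso (branch_of_tree LA hc) (branch_of_tree sA hc')
         (branch_of_sum_inr tA LA hc)).
Qed.

Lemma root_children_weight_image : in_image_SpecHNAP f.
Proof.
exists (fun L => \prod_(t <- L) aut_weight t); split; last first.
  by move=> t Tt; rewrite big_seq1 /aut_weight mulrAC divff ?nAut_neq0 ?mul1r.
split => [|L1 L2 _ _|L1 L2 T1 T2 I]; rewrite ?big_nil ?big_cat //.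
have F1 := tree_list_forest T1; have F2 := tree_list_forest T2.
rewrite !prod_aut_weight_forest_of //.
apply: root_children_weight_iso (forest_of_acyclic F1) (forest_of_acyclic F2) _.
apply: poset_iso_trans (poset_iso_sym (intervals_downsets_iso F1)) _.
exact: poset_iso_trans I (intervals_downsets_iso F2).
Qed.

End Converse.

End Weights.

Theorem lemma6p12 (f : ltree -> rat) :
  in_GNAP f ->
  (in_image_SpecHNAP f <->
   (forall (t : ltree) (r : ltV t), tree t -> ltp t r = r ->
      (nAut (ltp t))%:R * f t =
      \prod_(c : ltV t | (c != r) && (ltp t c == r))
         ((nAut (ltp (branch t r c)))%:R * f (branch t r c)))).
Proof.
move=> hf; split => [hIm t r Tt hr | H].
  by rewrite (root_children_weightE f Tt hr); apply: image_root_children_weight.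
apply: root_children_weight_image hf _ => t Tt.
have [r hr] := tree_root Tt.
by rewrite -(root_children_weightE f Tt hr); apply: H.
Qed.
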